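(* Let $\Gamma$ be a finite graph and $R(\Gamma)$ its right angled Artin group. Then $m(R(\Gamma))=2$ (equivalently, $m_p(R(\Gamma))=2$ for every characteristic $p$) if and only if the graph obtained from $\Gamma$ by removing all vertices that are adjacent to every other vertex (together with their incident edges) has at least two connected components, each of which is a complete graph.
   Context: For a finite simple graph $\Gamma$, the right angled Artin group $R(\Gamma)$ has one generator for each vertex of $\Gamma$ and relations saying that the generators of adjacent vertices commute. For a group $G$ and $p$ zero or a prime, $m_p(G)$ is the minimal $d$ such that $G$ embeds in $GL(d,\mathbb{F})$ for some field $\mathbb{F}$ of characteristic $p$ ($\infty$ if none), and $m(G)=\min_p m_p(G)$. *)

From Stdlib Require Import Relations.
From mathcomp Require Import all_boot all_order all_algebra.
Set Implicit Arguments. Unset Strict Implicit. Unset Printing Implicit Defensive.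
Import GRing.Theory.
Local Open Scope ring_scope.

(* A finite simple graph: vertex type V : finType, adjacency e : rel V,
   symmetric and irreflexive (these are hypotheses of the theorem). *)

(* Words in the generators of R(Gamma) and their inverses:
   (v, true) is the generator v, (v, false) its inverse. *)
Definition letter (V : Type) := (V * bool)%type.
Definition word (V : Type) := seq (letter V).

Inductive raag_step (V : Type) (e : V -> V -> bool) : word V -> word V -> Prop :=
  | raag_cancel (u w : word V) (x : V) (b : bool) :
      raag_step e (u ++ [:: (x, b); (x, ~~ b)] ++ w) (u ++ w)
  | raag_swap (u w : word V) (x y : V) (b c : bool) :
      e x y ->
      raag_step e (u ++ [:: (x, b); (y, c)] ++ w) (u ++ [:: (y, c); (x, b)] ++ w).

Definition raag_eq (V : Type) (e : V -> V -> bool) : word V -> word V -> Prop :=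
  clos_refl_sym_trans (word V) (raag_step e).

Definition eval_word (F : fieldType) (d : nat) (V : Type)
    (rho : V -> 'M[F]_d) (w : word V) : 'M[F]_d :=
  foldr (fun l M => (if l.2 then rho l.1 else invmx (rho l.1)) *m M) 1%:M w.

Definition raag_embeds (V : finType) (e : rel V) (F : fieldType) (d : nat) : Prop :=
  exists rho : V -> 'M[F]_d,
    [/\ forall v, rho v \in unitmx,
        forall x y, e x y -> rho x *m rho y = rho y *m rho x
      & forall w : word V, eval_word rho w = 1%:M -> raag_eq e w [::]].

(* m(R(Gamma)) = d : d is the least dimension such that R(Gamma) embeds in
   GL(d, F) for some field F (of any characteristic). *)
Definition raag_m_eq (V : finType) (e : rel V) (d : nat) : Prop :=
  (exists F : fieldType, raag_embeds e F d) /\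
  (forall d' : nat, (d' < d)%N -> forall F : fieldType, ~ raag_embeds e F d').

Definition central_vertex (V : finType) (e : rel V) (v : V) : bool :=
  [forall u, (u != v) ==> e v u].

Definition core_vertices (V : finType) (e : rel V) : {set V} :=
  [set v | ~~ central_vertex e v].

Definition core_rel (V : finType) (e : rel V) : rel V :=
  [rel x y | [&& e x y, x \in core_vertices e & y \in core_vertices e]].

Definition core_condition (V : finType) (e : rel V) : Prop :=
  (exists x y, [/\ x \in core_vertices e, y \in core_vertices e
                 & ~~ connect (core_rel e) x y]) /\
  (forall x y, x \in core_vertices e -> y \in core_vertices e ->
     x != y -> connect (core_rel e) x y -> e x y).

From Stdlib Require Import Relations.
From mathcomp Require Import all_boot all_order all_algebra.
From mathcomp Require Import ring zify.
Set Implicit Arguments. Unset Strict Implicit. Unset Printing Implicit Defensive.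
Import GRing.Theory Num.Theory.
Local Open Scope ring_scope.

(* Suppose R(Gamma) embeds in GL(2, F). Commutators of non-adjacent generators
   are non-trivial in R(Gamma) (map them to two non-commuting shears), so a
   non-central vertex b, having a non-neighbour, has a non-scalar image; as the
   centralizer of a non-scalar 2 x 2 matrix is commutative, any two distinct
   neighbours of b are adjacent. Hence every component of the core is a clique, and a
   non-central vertex and its non-neighbours lie in different components. If
   the core is empty, Gamma is complete and R(Gamma) = Z^n embeds in GL(1, Q)
   by distinct primes, contradicting minimality.
   Conversely, over Q(X) send central vertices to distinct prime scalars, and
   the vertices of a component with constant c to unipotent matrices fixing the
   line (c, 1), through distinct monomials. After moving central letters
   out and deleting trivial blocks, a word becomes a product of blocks from
   pairwise different consecutive components, and a ping-pong on polynomial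
   degrees shows it is not the identity. Non-adjacent vertices in different
   components rule out GL(1). *)

Definition mx2 (R : nzRingType) (a b c d : R) : 'M[R]_2 :=
  \matrix_(i < 2, j < 2)
    if i == 0 :> nat then (if j == 0 :> nat then a else b)
    else (if j == 0 :> nat then c else d).

Section Matrix2.
Variable R : nzRingType.
Implicit Types a b c d : R.

Lemma mx2_eta (A : 'M[R]_2) : A = mx2 (A 0 0) (A 0 1) (A 1 0) (A 1 1).
Proof.
apply/matrixP => i j; rewrite !mxE.
by case: i => [[|[|//]] ?]; case: j => [[|[|//]] ?] /=; congr (A _ _); apply: val_inj.
Qed.

Lemma mx2_inj a b c d a' b' c' d' :
  mx2 a b c d = mx2 a' b' c' d' -> [/\ a = a', b = b', c = c' & d = d'].
Proof.
move/matrixP=> eq_ij.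
by move: (eq_ij 0 0) (eq_ij 0 1) (eq_ij 1 0) (eq_ij 1 1); rewrite !mxE.
Qed.

Lemma scalar_mx2 a : a%:M = mx2 a 0 0 a.
Proof.
by apply/matrixP => i j; rewrite !mxE; case: i => [[|[|//]] ?]; case: j => [[|[|//]] ?].
Qed.

Lemma mul_mx2 a b c d a' b' c' d' :
  mx2 a b c d *m mx2 a' b' c' d' =
  mx2 (a * a' + b * c') (a * b' + b * d') (c * a' + d * c') (c * b' + d * d').
Proof.
apply/matrixP => i j; rewrite !mxE !big_ord_recl big_ord0 !mxE addr0.
by case: i => [[|[|//]] ?]; case: j => [[|[|//]] ?].
Qed.

Lemma add_scale_mx2 k l a b c d :
  k%:M + l *: mx2 a b c d = mx2 (k + l * a) (l * b) (l * c) (k + l * d).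
Proof.
apply/matrixP => i j; rewrite !mxE.
by case: i => [[|[|//]] ?]; case: j => [[|[|//]] ?] /=; rewrite ?add0r.
Qed.

Lemma mulmx2E (A B : 'M[R]_2) i j : (A *m B) i j = A i 0 * B 0 j + A i 1 * B 1 j.
Proof.
by rewrite mxE !big_ord_recl big_ord0 addr0; congr (_ + A i _ * B _ j); apply: val_inj.
Qed.

End Matrix2.

Lemma mx2_commute_span (F : fieldType) (A B : 'M[F]_2) :
  ~~ is_scalar_mx B -> A *m B = B *m A -> exists k l, A = k%:M + l *: B.
Proof.
rewrite [A]mx2_eta [B]mx2_eta !mul_mx2.
move: (A 0 0) (A 0 1) (A 1 0) (A 1 1) (B 0 0) (B 0 1) (B 1 0) (B 1 1).
move=> a1 a2 a3 a4 p q r s nsc /mx2_inj[E1 E2 E3 _].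
have [q0|qn0] := eqVneq q 0; last first.
  have -> : a3 = (a1 * p + a2 * r - p * a1) / q by rewrite E1; field.
  have -> : a4 = (a1 * q + a2 * s - p * a2) / q by rewrite E2; field.
  by exists (a1 - a2 / q * p), (a2 / q); rewrite add_scale_mx2; congr mx2; field.
have [r0|rn0] := eqVneq r 0; last first.
  have -> : a2 = (p * a1 + q * a3 - a1 * p) / r by rewrite -E1; field.
  have -> : a4 = (r * a1 + s * a3 - a3 * p) / r by rewrite -E3; field.
  by exists (a1 - a3 / r * p), (a3 / r); rewrite add_scale_mx2 q0; congr mx2; field.
have ps : p - s != 0.
  rewrite subr_eq0; apply: contra nsc => /eqP ps.
  by rewrite q0 r0 ps -scalar_mx2 scalar_mx_is_scalar.
have -> : a2 = (a1 * q + a2 * s - q * a4 - a2 * s) / (p - s) by rewrite E2; field.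
have -> : a3 = (r * a1 + s * a3 - a4 * r - s * a3) / (p - s) by rewrite -E3; field.
exists (a1 - (a1 - a4) / (p - s) * p), ((a1 - a4) / (p - s)).
by rewrite add_scale_mx2 q0 r0; congr mx2; field.
Qed.

Lemma mx2_commute_trans (F : fieldType) (A B C : 'M[F]_2) : ~~ is_scalar_mx B ->
  A *m B = B *m A -> C *m B = B *m C -> A *m C = C *m A.
Proof.
move=> nsc /(mx2_commute_span nsc)[k [l ->]] /(mx2_commute_span nsc)[k' [l' ->]].
rewrite !mulmxDl !mulmxDr !mul_scalar_mx !mul_mx_scalar -!scalemxAl -!scalemxAr.
rewrite !scalerA !scale_scalar_mx [k' * k]mulrC [l' * l]mulrC -!addrA.
by rewrite (addrCA ((k * l') *: B)).
Qed.

Section RaagWords.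
Variables (V : eqType) (e : V -> V -> bool).
Implicit Types (u w a b c d : word V) (l : letter V).

Lemma raag_eq_trans b a c : raag_eq e a b -> raag_eq e b c -> raag_eq e a c.
Proof. exact: rst_trans. Qed.

Lemma raag_step_cat u w a b : raag_step e a b -> raag_step e (u ++ a ++ w) (u ++ b ++ w).
Proof.
case=> [u' w' x c|u' w' x y c d exy].
  by move: (raag_cancel e (u ++ u') (w' ++ w) x c); rewrite -!catA.
by move: (raag_swap (u ++ u') (w' ++ w) c d exy); rewrite -!catA.
Qed.

Lemma raag_eq_ctx u w a b : raag_eq e a b -> raag_eq e (u ++ a ++ w) (u ++ b ++ w).
Proof.
elim=> [{}a {}b /(raag_step_cat u w)|{}a|{}a {}b _|{}a {}b c _ IH1 _ IH2].
- exact: rst_step.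
- exact: rst_refl.
- exact: rst_sym.
- exact: raag_eq_trans IH2.
Qed.

Lemma raag_eq_cat a b c d : raag_eq e a b -> raag_eq e c d -> raag_eq e (a ++ c) (b ++ d).
Proof.
move=> /(raag_eq_ctx [::] c) eq_ab /(raag_eq_ctx b [::]); rewrite !cats0.
exact: raag_eq_trans eq_ab.
Qed.

Lemma raag_eq_cons l a b : raag_eq e a b -> raag_eq e (l :: a) (l :: b).
Proof. exact: (raag_eq_cat (rst_refl _ _ [:: l])). Qed.

Definition letter_comm l l' := (l.1 == l'.1) || e l.1 l'.1.

Lemma raag_eq_swap u w l l' :
  letter_comm l l' -> raag_eq e (u ++ l :: l' :: w) (u ++ l' :: l :: w).
Proof.
case: l l' => [x b] [y c] /orP[/eqP/= <-|/= exy]; last by apply: rst_step; apply: raag_swap.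
have [<-|/negPf nbc] := eqVneq b c; first exact: rst_refl.
have -> : c = ~~ b by case: b c nbc => [] [].
apply: (raag_eq_trans (b := u ++ w)); first by apply: rst_step; exact: raag_cancel.
by apply/rst_sym/rst_step; move: (raag_cancel e u w x (~~ b)); rewrite negbK.
Qed.

Lemma raag_eq_move l u w :
  all (letter_comm^~ l) u -> raag_eq e (u ++ l :: w) (l :: u ++ w).
Proof.
elim: u => [|x u IH] /=; first by move=> _; exact: rst_refl.
case/andP=> xl /IH /(raag_eq_cons x) eq_lw; apply: raag_eq_trans eq_lw _.
exact: (raag_eq_swap [::] (u ++ w) xl).
Qed.

Definition eval_letters (R : pzRingType) n (L : letter V -> 'M[R]_n) w : 'M[R]_n :=
  foldr (fun l M => L l *m M) 1%:M w.

Lemma eval_letters_cat (R : pzRingType) n (L : letter V -> 'M[R]_n) a b :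
  eval_letters L (a ++ b) = eval_letters L a *m eval_letters L b.
Proof. by elim: a => [|l a IH] /=; rewrite ?mul1mx // IH mulmxA. Qed.

Lemma eval_letters_raag_eq (R : pzRingType) n (L : letter V -> 'M[R]_n) :
  (forall x s, L (x, s) *m L (x, ~~ s) = 1%:M) ->
  (forall x y s t, e x y -> L (x, s) *m L (y, t) = L (y, t) *m L (x, s)) ->
  forall a b, raag_eq e a b -> eval_letters L a = eval_letters L b.
Proof.
move=> Linv Lcomm a b; elim=> [{}a {}b []|//|//|a' b' c _ -> _ -> //].
  by move=> u w x c; rewrite !eval_letters_cat /= mulmx1 Linv mul1mx.
by move=> u w x y c d exy; rewrite !eval_letters_cat /= !mulmx1 Lcomm.
Qed.

End RaagWords.

Definition comm_word (V : Type) (x y : V) : word V :=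
  [:: (x, true); (y, true); (x, false); (y, false)].

Section Nontrivial.
Variables (V : eqType) (e : V -> V -> bool).
Hypotheses (e_sym : symmetric e) (e_irr : irreflexive e).

Definition shear_letters (x y : V) (l : letter V) : 'M[rat]_2 :=
  let s := if l.2 then 1 else -1 in
  if l.1 == x then mx2 1 s 0 1 else if l.1 == y then mx2 1 0 s 1 else 1%:M.

Lemma shear_letters_out x y u s :
  u \notin [:: x; y] -> shear_letters x y (u, s) = 1%:M.
Proof. by rewrite /shear_letters /= !inE negb_or => /andP[/negPf -> /negPf ->]. Qed.

Lemma eval_shear_raag_eq x y a b : ~~ e x y -> raag_eq e a b ->
  eval_letters (shear_letters x y) a = eval_letters (shear_letters x y) b.
Proof.
move=> nexy; apply: eval_letters_raag_eq => [u s|u w s t euw].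
  rewrite /shear_letters /=; case: (u == x); case: (u == y); case: s;
  by rewrite ?mulmx1 // mul_mx2 scalar_mx2; congr mx2; ring.
have : (u \notin [:: x; y]) || (w \notin [:: x; y]).
  rewrite !inE; apply: contraLR euw; rewrite negb_or !negbK.
  by case/andP=> /orP[]/eqP-> /orP[]/eqP->; rewrite ?e_irr // e_sym.
by case/orP=> /shear_letters_out ->; rewrite mulmx1 mul1mx.
Qed.

Lemma raag_letter_nontrivial x : ~ raag_eq e [:: (x, true)] [::].
Proof.
move=> /(eval_shear_raag_eq (negbT (e_irr x))).
by rewrite /= /shear_letters /= eqxx mulmx1 scalar_mx2 => /mx2_inj[].
Qed.

Lemma raag_comm_word_nontrivial x y :
  x != y -> ~~ e x y -> ~ raag_eq e (comm_word x y) [::].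
Proof.
move=> nxy nexy /(eval_shear_raag_eq nexy).
rewrite /= /shear_letters /= eqxx eq_sym (negPf nxy) eqxx mulmx1 !mul_mx2 scalar_mx2.
case/mx2_inj=> _ _ _ /eqP; rewrite mul1r !(mulr1, mul0r, mulr0, add0r, addr0).
by rewrite eq_sym oner_eq0.
Qed.

End Nontrivial.

Fixpoint prime_seq (n : nat) : nat :=
  if n is n'.+1 then s2val (prime_above (prime_seq n')) else 2.

Lemma prime_seq_prime n : prime (prime_seq n).
Proof. by case: n => [|n] //=; case: prime_above. Qed.

Lemma prime_seq_inj : injective prime_seq.
Proof.
apply/incn_inj/leq_mono/(homo_ltn ltn_trans) => n /=.
by case: prime_above.
Qed.

Section AbelianWords.
Variable V : finType.
Implicit Types (w : word V) (l : letter V).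

Definition vertex_prime (v : V) : nat := prime_seq (enum_rank v).

Lemma vertex_prime_prime v : prime (vertex_prime v).
Proof. exact: prime_seq_prime. Qed.

Lemma vertex_prime_inj : injective vertex_prime.
Proof. by move=> u v /prime_seq_inj/ord_inj/enum_rank_inj. Qed.

Lemma vertex_prime_neq0 v : (vertex_prime v)%:R != 0 :> rat.
Proof. by rewrite pnatr_eq0 -lt0n prime_gt0 ?vertex_prime_prime. Qed.

Definition exponent_sum (x : V) w : int :=
  \sum_(l <- w) if l.1 == x then (if l.2 then 1 else -1) else 0.

Definition prime_letter l : rat :=
  if l.2 then (vertex_prime l.1)%:R else (vertex_prime l.1)%:R^-1.

Definition prime_eval w : rat := \prod_(l <- w) prime_letter l.

Lemma prime_letter_inv x s : prime_letter (x, s) * prime_letter (x, ~~ s) = 1.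
Proof.
rewrite /prime_letter; case: s => /=; [rewrite mulfV | rewrite mulVf] => //;
  exact: vertex_prime_neq0.
Qed.

Lemma prime_eval_neq0 w : prime_eval w != 0.
Proof.
rewrite /prime_eval; elim: w => [|l w IH]; rewrite ?big_nil ?oner_eq0 //.
rewrite big_cons mulf_neq0 //.
by rewrite /prime_letter; case: l.2; rewrite ?invr_eq0 vertex_prime_neq0.
Qed.

Lemma prime_eval_frac w : exists N D : nat, [/\ (0 < N)%N, (0 < D)%N,
  prime_eval w = N%:R / D%:R &
  forall u, (logn (vertex_prime u) N)%:Z - (logn (vertex_prime u) D)%:Z = exponent_sum u w].
Proof.
elim: w => [|[v s] w [N [D [N0 D0 eq_w log_w]]]].
  exists 1%N, 1%N; split => //; first by rewrite /prime_eval big_nil divr1.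
  by move=> u; rewrite /exponent_sum big_nil logn1.
have p0 := prime_gt0 (vertex_prime_prime v).
have exp_vsw u : exponent_sum u ((v, s) :: w) =
    (if v == u then (if s then 1 else -1) else 0) + exponent_sum u w.
  by rewrite /exponent_sum big_cons.
have logn_p u : logn (vertex_prime u) (vertex_prime v) = (v == u).
  by rewrite (logn_prime _ (vertex_prime_prime v)) (inj_eq vertex_prime_inj) eq_sym.
rewrite /prime_eval big_cons -/(prime_eval w) eq_w /prime_letter /=.
case: s exp_vsw => exp_vsw.
  exists (vertex_prime v * N)%N, D; split; rewrite ?muln_gt0 ?p0 //.
    by rewrite natrM mulrA.
  by move=> u; rewrite exp_vsw -log_w lognM // logn_p; case: (v == u); lia.
exists N, (vertex_prime v * D)%N; split; rewrite ?muln_gt0 ?p0 //.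
  by rewrite natrM invfM mulrCA mulrA.
by move=> u; rewrite exp_vsw -log_w lognM // logn_p; case: (v == u); lia.
Qed.

Lemma prime_eval_eq1 w : prime_eval w = 1 -> forall u, exponent_sum u w = 0.
Proof.
have [N [D [_ D0 -> log_w]]] := prime_eval_frac w.
move=> /(congr1 ( *%R^~ D%:R)); rewrite mul1r divfK ?pnatr_eq0 -?lt0n // => /eqP.
by rewrite eqr_nat => /eqP eq_ND u; rewrite -log_w eq_ND subrr.
Qed.

Lemma exponent_sum_sign v s w : (v, ~~ s) \notin w ->
  if s then 0 <= exponent_sum v w else exponent_sum v w <= 0.
Proof.
elim: w => [|[x t] w IH]; first by rewrite /exponent_sum big_nil; case: s.
rewrite in_cons negb_or => /andP[neq /IH sign_w] {IH}.
rewrite /exponent_sum big_cons /= -/(exponent_sum v w); move: sign_w.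
have [eq_xv|_] := eqVneq x v; last by rewrite add0r.
by subst x; move: neq; case: s; case: t; rewrite /= ?eqxx //= => _; lia.
Qed.

Variable e : rel V.

Lemma commuting_word_trivial w :
  {in w &, forall l l', letter_comm e l l'} -> (forall u, exponent_sum u w = 0) ->
  raag_eq e w [::].
Proof.
have [n] := ubnP (size w); elim: n w => // n IH [|[v s] w] /= size_w comm_w exp0;
  first exact: rst_refl.
have vs_in : (v, ~~ s) \in w.
  apply: contraT => /exponent_sum_sign; move: (exp0 v).
  by rewrite /exponent_sum big_cons eqxx -/(exponent_sum v w); case: (s) => /=; lia.
case/splitPr: w / vs_in size_w comm_w exp0 => u w size_w comm_w exp0.
have sub_uw : {subset u ++ w <= (v, s) :: u ++ (v, ~~ s) :: w}.
  by move=> l; rewrite !(inE, mem_cat) => /orP[]->; rewrite ?orbT.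
apply: (raag_eq_trans (b := (v, s) :: (v, ~~ s) :: u ++ w)).
  apply/raag_eq_cons/raag_eq_move/allP => l l_in; apply: comm_w.
  - by apply: sub_uw; rewrite mem_cat l_in.
  - by rewrite !(inE, mem_cat) eqxx !orbT.
apply: (raag_eq_trans (b := u ++ w)); first exact/rst_step/(raag_cancel e [::]).
apply: IH => [|l l' /sub_uw l_in /sub_uw l'_in|x].
- by move: size_w; rewrite !size_cat /=; lia.
- exact: comm_w.
- move: (exp0 x); rewrite /exponent_sum big_cons !big_cat big_cons /=.
  by case: (v == x); case: (s) => /=; lia.
Qed.

End AbelianWords.

Section PingPong.
Variable R : idomainType.
Implicit Types (c : R) (f : {poly R}) (X : 'M[{poly R}]_2).

(* [unip c f = 1 + f N] for the nilpotent [N = mx2 c (- c ^+ 2) 1 (- c)], whose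
   kernel is spanned by [(c, 1)]. *)
Definition unip c f : 'M[{poly R}]_2 :=
  mx2 (1 + c%:P * f) (- c%:P ^+ 2 * f) f (1 - c%:P * f).

Lemma unip_add c f g : unip c f *m unip c g = unip c (f + g).
Proof. by rewrite /unip mul_mx2; congr mx2; ring. Qed.

Lemma unip0 c : unip c 0 = 1%:M.
Proof. by rewrite /unip scalar_mx2; congr mx2; ring. Qed.

Definition deviation c X := X 0 0 - c%:P * X 1 0.

(* Ping-pong sets, read on the first column [(a, b)] of [X]: it is [near c] the
   fixed line [(c, 1)] of [unip c] when [a - c b] has smaller degree than [b]. *)
Definition far c X := (deviation c X != 0) && (size (X 1 0)%R <= size (deviation c X))%N.
Definition near c X := (deviation c X != 0) && (size (deviation c X) < size (X 1 0)%R)%N.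

Lemma deviation_unip c f X : deviation c (unip c f *m X) = deviation c X.
Proof. by rewrite /deviation !mulmx2E !mxE /=; ring. Qed.

Lemma unip_mulmx10 c f X : (unip c f *m X) 1 0 = f * deviation c X + X 1 0.
Proof. by rewrite /deviation !mulmx2E !mxE /=; ring. Qed.

Lemma far1 c : far c 1%:M.
Proof. by rewrite /far /deviation !mxE /= mulr0 subr0 oner_eq0 size_poly0. Qed.

Lemma near_neq0 c X : near c X -> X 1 0 != 0.
Proof. by case/andP=> _; apply: contraTneq => ->; rewrite size_poly0. Qed.

Lemma near_unip c f X : far c X -> (1 < size f)%N -> near c (unip c f *m X).
Proof.
rewrite /near /far deviation_unip unip_mulmx10 => /andP[dev0 size_dev] size_f.
have f0 : f != 0 by rewrite -size_poly_gt0 (ltn_trans _ size_f).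
have size_fdev : size (f * deviation c X) = (size f + size (deviation c X)).-1.
  exact: size_mul.
rewrite dev0 [size (_ + X 1 0)]size_polyDl size_fdev;
  by move: (size_poly_gt0 (deviation c X)); rewrite dev0; lia.
Qed.

Lemma near_far c c' X : near c X -> c != c' -> far c' X.
Proof.
rewrite /near /far => /andP[dev0 size_dev] neq_cc'.
have -> : deviation c' X = (c - c')%:P * X 1 0 + deviation c X.
  by rewrite /deviation polyCB; ring.
by rewrite -size_poly_gt0 size_polyDl size_Cmul ?subr_eq0 //; lia.
Qed.

End PingPong.

Lemma invmx_eq (R : comUnitRingType) n (A B : 'M[R]_n) : A *m B = 1%:M -> invmx A = B.
Proof.
move=> AB; have [uA _] := mulmx1_unit AB.
by rewrite -[LHS]mulmx1 -AB mulmxA mulVmx ?mul1mx.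
Qed.

Lemma map_mx_tofrac_inj (R : idomainType) m n :
  injective (map_mx (tofrac (R := R)) : 'M[R]_(m, n) -> 'M[{fraction R}]_(m, n)).
Proof.
move=> A B /matrixP eq_AB; apply/matrixP => i j.
by move: (eq_AB i j); rewrite !mxE => /eqP; rewrite tofrac_eq => /eqP.
Qed.

Lemma group_runs (T : Type) (K : eqType) (key : T -> K) (s : seq T) :
  exists bs : seq (K * seq T), [/\ s = flatten (map snd bs),
    all (fun kb => ~~ nilp kb.2 && all (fun x => key x == kb.1) kb.2) bs
  & sorted (fun kb kb' => kb.1 != kb'.1) bs].
Proof.
elim: s => [|x s [bs [-> runs_bs sorted_bs]]]; first by exists [::].
case: bs runs_bs sorted_bs => [|[k b] bs] runs_bs sorted_bs.
  by exists [:: (key x, [:: x])]; rewrite /= eqxx.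
have [eq_k|neq_k] := eqVneq (key x) k.
  exists ((k, x :: b) :: bs); split => //=; last by case: bs sorted_bs {runs_bs}.
  by move: runs_bs => /= /andP[/andP[_ ->] ->]; rewrite eq_k eqxx.
by exists ((key x, [:: x]) :: (k, b) :: bs); rewrite /= eqxx neq_k; split.
Qed.

Section Embedding2.
Variables (V : finType) (e : rel V).
Hypotheses (e_sym : symmetric e)
  (core_clique : forall x y, x \in core_vertices e -> y \in core_vertices e ->
     x != y -> connect (core_rel e) x y -> e x y).
Implicit Types (w : word V) (l : letter V).

Definition central_letter l := central_vertex e l.1.

Definition component (v : V) : V := fingraph.root (core_rel e) v.

Definition component_const (k : V) : rat := (enum_rank k : nat)%:R.

(* The exponent shift makes sums of these monomials vanish at [0], so that a
   non-zero sum is non-constant. *)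
Definition letter_poly l : {poly rat} :=
  if l.2 then 'X ^+ (enum_rank l.1).+1 else - 'X ^+ (enum_rank l.1).+1.

Definition raag_letter l : 'M[{poly rat}]_2 :=
  if central_letter l then (prime_letter l)%:P%:M
  else unip (component_const (component l.1)) (letter_poly l).

Lemma core_vertexE v : (v \in core_vertices e) = ~~ central_vertex e v.
Proof. by rewrite inE. Qed.

Lemma connect_core_sym : connect_sym (core_rel e).
Proof.
apply: sym_connect_sym => x y.
by rewrite /core_rel /= e_sym; case: (e y x); case: (x \in _); case: (y \in _).
Qed.

Lemma component_edge u v :
  ~~ central_vertex e u -> ~~ central_vertex e v -> e u v -> component u = component v.
Proof.
move=> cu cv euv; apply/eqP; rewrite /component (root_connect connect_core_sym).
by apply: connect1; rewrite /core_rel /= euv !core_vertexE cu cv.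
Qed.

Lemma letter_comm_component l l' : ~~ central_letter l -> ~~ central_letter l' ->
  component l.1 = component l'.1 -> letter_comm e l l'.
Proof.
move=> cl cl' /eqP; rewrite /component (root_connect connect_core_sym) => conn.
rewrite /letter_comm; have [//|neq] := eqVneq l.1 l'.1.
by rewrite core_clique ?core_vertexE.
Qed.

Lemma letter_comm_central l' l : central_letter l' -> letter_comm e l' l.
Proof.
move=> /forallP/(_ l.1); rewrite /letter_comm eq_sym.
by case: eqP => //= _; apply.
Qed.

Lemma raag_letter_inv x s : raag_letter (x, s) *m raag_letter (x, ~~ s) = 1%:M.
Proof.
rewrite /raag_letter /central_letter /=; case: (central_vertex e x).
  by rewrite -scalar_mxM -polyCM prime_letter_inv.
by rewrite unip_add /letter_poly; case: s; rewrite /= ?subrr ?addNr unip0.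
Qed.

Lemma raag_letter_comm x y s t : e x y ->
  raag_letter (x, s) *m raag_letter (y, t) = raag_letter (y, t) *m raag_letter (x, s).
Proof.
move=> exy; rewrite /raag_letter /central_letter /=.
case: (boolP (central_vertex e x)) => cx; first by rewrite scalar_mxC.
case: (boolP (central_vertex e y)) => cy; first by rewrite scalar_mxC.
by rewrite (component_edge cx cy exy) !unip_add addrC.
Qed.

Lemma split_central w : exists c s, [/\ raag_eq e w (c ++ s), all central_letter c,
  all (predC central_letter) s & (size c + size s = size w)%N].
Proof.
elim: w => [|l w [c [s [eq_w cen_c ncen_s size_cs]]]].
  by exists [::], [::]; split => //; exact: rst_refl.
case: (boolP (central_letter l)) => cl.
  by exists (l :: c), s; rewrite /= cl -size_cs; split => //; exact: raag_eq_cons.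
exists c, (l :: s); rewrite /= cl addnS size_cs; split => //.
apply: raag_eq_trans (raag_eq_cons l eq_w) _; apply/rst_sym/raag_eq_move.
by apply/allP => x /(allP cen_c); apply: letter_comm_central.
Qed.

Lemma eval_raag_letter_raag_eq a b :
  raag_eq e a b -> eval_letters raag_letter a = eval_letters raag_letter b.
Proof. exact: eval_letters_raag_eq raag_letter_inv raag_letter_comm a b. Qed.

Lemma eval_central c : all central_letter c ->
  eval_letters raag_letter c = (prime_eval c)%:P%:M.
Proof.
rewrite /prime_eval; elim: c => [|l c IH] /=; first by rewrite big_nil.
by case/andP=> cl /IH ->; rewrite /raag_letter cl big_cons polyCM scalar_mxM.
Qed.

Definition letter_sum w : {poly rat} := \sum_(l <- w) letter_poly l.

Lemma eval_block k b : all (fun l => ~~ central_letter l && (component l.1 == k)) b ->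
  eval_letters raag_letter b = unip (component_const k) (letter_sum b).
Proof.
rewrite /letter_sum; elim: b => [|l b IH] /=; first by rewrite big_nil unip0.
case/andP=> /andP[/negPf cl /eqP eq_k] /IH ->.
by rewrite /raag_letter cl eq_k unip_add big_cons.
Qed.

Lemma coef_letter_sum w u : (letter_sum w)`_(enum_rank u).+1 = (exponent_sum u w)%:~R.
Proof.
rewrite /letter_sum /exponent_sum.
elim: w => [|[v s] w IH]; first by rewrite !big_nil coef0.
rewrite !big_cons coefD IH intrD /letter_poly /=; congr (_ + _).
rewrite (fun_if (fun p : {poly rat} => p`_(enum_rank u).+1)) coefN coefXn eqSS.
by rewrite (inj_eq val_inj) (inj_eq enum_rank_inj) eq_sym; case: (v == u); case: s.
Qed.

Lemma coef0_letter_sum w : (letter_sum w)`_0 = 0.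
Proof.
rewrite /letter_sum; elim: w => [|l w IH]; first by rewrite big_nil coef0.
by rewrite big_cons coefD IH addr0 /letter_poly; case: l.2; rewrite ?coefN coefXn ?oppr0.
Qed.

Lemma size_letter_sum w :
  ~~ [forall u, exponent_sum u w == 0] -> (1 < size (letter_sum w))%N.
Proof.
apply: contraR; rewrite -leqNgt => /size1_polyC; rewrite coef0_letter_sum => sum0.
by apply/forallP => u; rewrite -(intr_eq0 rat) -coef_letter_sum sum0 coef0.
Qed.

Definition reduced_block (kb : V * word V) :=
  all (fun l => ~~ central_letter l && (component l.1 == kb.1)) kb.2 &&
  ~~ [forall u, exponent_sum u kb.2 == 0].

Lemma reduced_form w : exists c bs, [/\ raag_eq e w (c ++ flatten (map snd bs)),
  all central_letter c, all reduced_block bs & sorted (fun kb kb' => kb.1 != kb'.1) bs].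
Proof.
have [n] := ubnP (size w); elim: n w => // n IH w size_w.
have [c [s [eq_w cen_c ncen_s size_cs]]] := split_central w.
have [bs [eq_s runs_bs sorted_bs]] := group_runs (fun l : letter V => component l.1) s.
have block_sub kb : kb \in bs -> {subset kb.2 <= s}.
  by move=> kb_in l l_in; rewrite eq_s; apply/flattenP; exists kb.2 => //; apply: map_f.
have block_comm kb : kb \in bs -> {in kb.2 &, forall l l', letter_comm e l l'}.
  move=> kb_in l l' l_in l'_in; have /andP[_ /allP run] := allP runs_bs _ kb_in.
  apply: letter_comm_component; try exact: (allP ncen_s _ (block_sub _ kb_in _ _)).
  by rewrite (eqP (run _ l_in)) (eqP (run _ l'_in)).
case: (boolP (has (fun kb => [forall u, exponent_sum u kb.2 == 0]) bs)); last first.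
  move=> /hasPn nonzero; exists c, bs; rewrite -eq_s; split => //; apply/allP => kb kb_in.
  rewrite /reduced_block nonzero // andbT; have /andP[_ /allP run] := allP runs_bs _ kb_in.
  apply/allP => l l_in; rewrite run // andbT.
  exact: (allP ncen_s _ (block_sub _ kb_in _ l_in)).
case/hasP=> kb kb_in /forallP zero_kb.
have kb_triv : raag_eq e kb.2 [::].
  by apply: commuting_word_trivial (block_comm _ kb_in) _ => u; apply/eqP.
have /andP[kb_ne _] := allP runs_bs _ kb_in.
case/splitPr: bs / kb_in eq_s {runs_bs sorted_bs block_sub block_comm} => bs1 bs2.
rewrite map_cat flatten_cat /= => eq_s.
have [|c' [bs' [eq_w' cen_c' red_bs' sorted_bs']]] :=
  IH (c ++ flatten (map snd bs1) ++ flatten (map snd bs2)).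
  move: size_w kb_ne; rewrite -size_cs eq_s !size_cat /nilp -lt0n.
  set k := size kb.2; set b1 := size (flatten _); set b2 := size (flatten _); lia.
exists c', bs'; split => //; apply: raag_eq_trans eq_w (raag_eq_trans _ eq_w').
by apply/raag_eq_cat; [exact: rst_refl | rewrite eq_s; exact: raag_eq_ctx _ _ kb_triv].
Qed.

Lemma component_const_inj : injective component_const.
Proof. by move=> k k' /eqP; rewrite eqr_nat => /eqP/val_inj/enum_rank_inj. Qed.

Lemma near_eval_blocks k b bs : all reduced_block ((k, b) :: bs) ->
  sorted (fun kb kb' => kb.1 != kb'.1) ((k, b) :: bs) ->
  near (component_const k) (eval_letters raag_letter (flatten (map snd ((k, b) :: bs)))).
Proof.
elim: bs k b => [|[k' b'] bs IH] k b /= /andP[/andP[run_b /size_letter_sum size_b] red_bs];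
  rewrite eval_letters_cat (eval_block run_b).
  by rewrite /= mulmx1 -[unip _ _]mulmx1 => _; apply: near_unip (far1 _) size_b.
case/andP=> neq_k sorted_bs; apply: near_unip size_b.
apply: near_far (IH _ _ red_bs sorted_bs) _.
by rewrite (inj_eq component_const_inj) eq_sym.
Qed.

Lemma eval_raag_letter_faithful w : eval_letters raag_letter w = 1%:M -> raag_eq e w [::].
Proof.
have [c [[|[k b] bs] [eq_w cen_c red_bs sorted_bs]]] := reduced_form w;
  rewrite (eval_raag_letter_raag_eq eq_w) eval_letters_cat eval_central //.
  rewrite /= mulmx1 => /matrixP/(_ 0 0); rewrite !mxE /=.
  move=> /polyC_inj/prime_eval_eq1 exp0.
  rewrite cats0 in eq_w; apply: raag_eq_trans eq_w (commuting_word_trivial _ exp0).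
  by move=> l l' /(allP cen_c) cl _; apply: letter_comm_central.
move=> /matrixP/(_ 1 0); rewrite mul_scalar_mx mxE [RHS]mxE /= => /eqP.
rewrite mulf_eq0 polyC_eq0 (negPf (prime_eval_neq0 c)) /=.
by rewrite (negPf (near_neq0 (near_eval_blocks red_bs sorted_bs))).
Qed.

Lemma raag_embeds_fraction : raag_embeds e {fraction {poly rat}} 2.
Proof.
pose tf := tofrac (R := {poly rat}); pose rho v := map_mx tf (raag_letter (v, true)).
have mapK v s :
    map_mx tf (raag_letter (v, s)) *m map_mx tf (raag_letter (v, ~~ s)) = 1%:M.
  by rewrite -map_mxM raag_letter_inv map_mx1.
have eval_rho w : eval_word rho w = map_mx tf (eval_letters raag_letter w).
  elim: w => [|[v s] w IH]; first by rewrite map_mx1.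
  rewrite /eval_word /= -/(eval_word rho w) IH map_mxM; case: s => //=.
  by rewrite (invmx_eq (mapK v true)).
exists rho; split=> [v|x y exy|w]; first exact: (mulmx1_unit (mapK v true)).1.
  by rewrite -!map_mxM raag_letter_comm.
by rewrite eval_rho -(map_mx1 tf) => /map_mx_tofrac_inj/eval_raag_letter_faithful.
Qed.

End Embedding2.

Section SmallDimension.
Variables (V : finType) (e : rel V).
Hypotheses (e_sym : symmetric e) (e_irr : irreflexive e).

Lemma eval_comm_word (F : fieldType) d (rho : V -> 'M[F]_d) x y :
  rho x \in unitmx -> rho y \in unitmx -> rho x *m rho y = rho y *m rho x ->
  eval_word rho (comm_word x y) = 1%:M.
Proof.
move=> ux uy xy; rewrite /eval_word /= mulmx1 !mulmxA xy.
by rewrite -(mulmxA (rho y)) mulmxV // mulmx1 mulmxV.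
Qed.

Lemma raag_not_embeds0 (F : fieldType) (x : V) : ~ raag_embeds e F 0.
Proof.
case=> rho [_ _ faithful]; apply: (raag_letter_nontrivial e_sym e_irr (x := x)).
by apply: faithful; apply/matrixP => [[]].
Qed.

Lemma raag_not_embeds1 (F : fieldType) x y : x != y -> ~~ e x y -> ~ raag_embeds e F 1.
Proof.
move=> nxy nexy [rho [unit_rho _ faithful]].
apply: (raag_comm_word_nontrivial e_sym e_irr nxy nexy); apply/faithful/eval_comm_word => //.
by apply/matrixP => i j; rewrite !mxE !big_ord1 !ord1 mulrC.
Qed.

Lemma embeds2_core_transitive (F : fieldType) : raag_embeds e F 2 ->
  forall a b c, b \in core_vertices e -> e a b -> e b c -> a != c -> e a c.
Proof.
case=> rho [unit_rho comm_rho faithful] a b c; rewrite inE => /forallPn[d].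
rewrite negb_imply => /andP[ndb nebd] eab ebc nac; apply/negPn/negP => neac.
have [/is_scalar_mxP[k rho_b]|nsc] := boolP (is_scalar_mx (rho b)).
  have [] := raag_comm_word_nontrivial e_sym e_irr (x := b) (y := d); rewrite 1?eq_sym //.
  by apply/faithful/eval_comm_word; rewrite // rho_b scalar_mxC.
have [] := raag_comm_word_nontrivial e_sym e_irr nac neac.
apply/faithful/eval_comm_word => //; apply: (mx2_commute_trans nsc); first exact: comm_rho.
by apply: comm_rho; rewrite e_sym.
Qed.

End SmallDimension.

Lemma raag_embeds_rat_complete (V : finType) (e : rel V) :
  (forall u v, u != v -> e u v) -> raag_embeds e rat 1.
Proof.
move=> complete; pose rho (v : V) : 'M[rat]_1 := (vertex_prime v)%:R%:M.
have eval_rho w : eval_word rho w = (prime_eval w)%:M.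
  elim: w => [|[v s] w IH]; first by rewrite /prime_eval big_nil.
  rewrite /eval_word /= -/(eval_word rho w) IH /prime_eval big_cons -/(prime_eval w).
  by case: s; rewrite /prime_letter /= ?invmx_scalar -scalar_mxM.
exists rho; split=> [v|x y _|w]; first by rewrite unitmxE det_scalar unitfE vertex_prime_neq0.
  exact: scalar_mxC.
rewrite eval_rho => /matrixP/(_ 0 0); rewrite !mxE /= => /prime_eval_eq1.
apply: commuting_word_trivial => l l' _ _; rewrite /letter_comm.
by case: eqP => //= /eqP; apply: complete.
Qed.

Lemma core_connect_edge (V : finType) (e : rel V) :
  (forall a b c, b \in core_vertices e -> e a b -> e b c -> a != c -> e a c) ->
  forall x y, connect (core_rel e) x y -> x != y -> e x y.
Proof.
move=> core_trans x y /connectP[p path_p ->{y}].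
elim: p x path_p => [|z p IH] x /=; first by rewrite eqxx.
case/andP=> /and3P[exz _ z_core] path_zp nxy.
have [eq_z|neq_z] := eqVneq z (last z p); first by rewrite -eq_z.
exact: core_trans z_core exz (IH _ path_zp neq_z) nxy.
Qed.

Lemma core_two_components (V : finType) (e : rel V) (e_sym : symmetric e) :
  (forall x y, connect (core_rel e) x y -> x != y -> e x y) ->
  forall v, v \in core_vertices e ->
  exists x y, [/\ x \in core_vertices e, y \in core_vertices e & ~~ connect (core_rel e) x y].
Proof.
move=> core_clique v v_core.
have /forallPn[u] : ~~ central_vertex e v by rewrite inE in v_core.
rewrite negb_imply => /andP[nuv nevu].
have u_core : u \in core_vertices e.
  rewrite inE; apply: contra nevu => /forallP/(_ v); rewrite eq_sym nuv e_sym; exact.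
by exists v, u; split=> //; apply: contra nevu => /core_clique; apply; rewrite eq_sym.
Qed.

Theorem proposition3p1 (V : finType) (e : rel V)
    (e_sym : symmetric e) (e_irr : irreflexive e) :
  raag_m_eq e 2 <-> core_condition e.
Proof.
split=> [[[F emb2] min2]|[[x [y [x_core y_core ncon]]] core_clique]].
  have core_clique := core_connect_edge (embeds2_core_transitive e_sym e_irr emb2).
  split=> [|x y _ _ nxy /core_clique]; last exact.
  have [v v_core|no_core] := pickP (mem (core_vertices e)).
    exact: core_two_components e_sym core_clique v v_core.
  case: (min2 1%N isT rat); apply: raag_embeds_rat_complete => u v nuv.
  by move: (no_core u); rewrite /= inE => /negbFE/forallP/(_ v); rewrite eq_sym nuv.
have nxy : x != y by apply: contraNneq ncon => ->; exact: connect0.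
have nexy : ~~ e x y.
  by apply: contra ncon => exy; apply: connect1; rewrite /core_rel /= exy x_core y_core.
split; first by exists {fraction {poly rat}}; exact: raag_embeds_fraction.
case=> [|[|//]] _ F; first exact: raag_not_embeds0 e_sym e_irr F x.
exact: raag_not_embeds1 e_sym e_irr F x y nxy nexy.
Qed.
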